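(* Let $G=(V,E)$ be a graph with maximum degree $\Delta\ge 1$, let $I_i\subseteq V$ be an independent set, let $A_i = V\setminus \hat\Gamma(I_i)$, and write $\deg_i,\Gamma_i,\hat\Gamma_i$ for degree, neighborhood and closed neighborhood in the induced subgraph $G(A_i)$. Perform one stage: each $v\in A_i$ independently selects itself with probability $\frac{1}{\Delta+1}$, and $I_{i+1} = I_i\cup\{v\in A_i : v \text{ is the only vertex of } \hat\Gamma_i(v) \text{ that selected itself}\}$; let $A_{i+1}=V\setminus\hat\Gamma(I_{i+1})$. Let $S\subseteq A_i$ be such that $\operatorname{dist}_G(u,u')\ge 5$ for all distinct $u,u'\in S$ and $\deg_i(u)\ge \Delta/2$ for all $u\in S$. Then $\Pr[S\subseteq A_{i+1}] \le p^{|S|}$, where $p = 1-(1-e^{-1/2})e^{-1}\approx 0.85$.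
   Context: For $U\subseteq V$, $\hat\Gamma(U)$ denotes $U$ together with all neighbors of vertices in $U$; for a vertex $v$, $\hat\Gamma(v)=\Gamma(v)\cup\{v\}$. $\operatorname{dist}_G$ is shortest-path distance in $G$. $G(U)$ denotes the subgraph induced by $U$. *)

From mathcomp Require Import all_boot.
From Stdlib Require Import Reals.
Set Implicit Arguments. Unset Strict Implicit. Unset Printing Implicit Defensive.

Section Graph.
Variable T : finType.
Variable e : rel T.

Definition simple_graph : Prop := symmetric e /\ irreflexive e.

Definition nbhd (v : T) : {set T} := [set u | e v u].
Definition deg (v : T) : nat := #|nbhd v|.
Definition maxdeg : nat := \max_(v : T) deg v.

Definition cnbhd (U : {set T}) : {set T} :=
  [set v | (v \in U) || [exists u in U, e u v]].

Definition independent (I : {set T}) : Prop :=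
  forall u v, u \in I -> v \in I -> ~~ e u v.

Definition deg_in (A : {set T}) (v : T) : nat := #|[set u in A | e v u]|.

Fixpoint ball (k : nat) (u : T) : {set T} :=
  match k with
  | 0 => [set u]
  | k'.+1 => cnbhd (ball k' u)
  end.

(* dist_G(u,u') >= d  (d >= 1); infinite distance allowed *)
Definition dist_ge (d : nat) (u u' : T) : Prop := u' \notin ball d.-1 u.

Definition avail (I : {set T}) : {set T} := ~: cnbhd I.

(* one stage, given the set X ⊆ A_i of vertices that selected themselves:
   v ∈ A_i joins if v ∈ X and no vertex of Γ_i(v) (neighbours inside A_i) is in X *)
Definition next_indep (I X : {set T}) : {set T} :=
  I :|: [set v in avail I | (v \in X) &&
                            [forall u in avail I, e v u ==> (u \notin X)]].

(* probability (product measure, each v ∈ A selects w.p. q) of the event P *)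
Definition prob_sel (A : {set T}) (q : R) (P : {set T} -> bool) : R :=
  \big[Rplus/0%R]_(X : {set T} | (X \subset A) && P X)
     (q ^ #|X| * (1 - q) ^ (#|A| - #|X|))%R.

End Graph.

Definition p_const : R := (1 - (1 - exp (- / 2)) * exp (-1))%R.

(* One stage of the randomized independent-set process: a vertex u of the
   available set A = V \ Γ̂(I) survives the stage (stays available) iff no
   vertex of its closed neighbourhood joins I, where w joins iff w selected
   itself and none of its neighbours did.

   Proof plan.
   1. Elementary theory of the product measure [prob_sel A q]: splitting off
      one coordinate, monotonicity, complements, the probability of avoiding a
      set, and independence of events depending on disjoint sets of
      coordinates; hence the probability that all of a family of events with
      pairwise disjoint supports hold is at most the product of the bounds.
   2. Survival of u is determined by the selections in the ball of radius 2
      around u; vertices at distance >= 5 have disjoint such balls.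
   3. A single vertex u with deg_A(u) >= Δ/2 is removed with probability at
      least (1 - (1-q)^(deg_A(u)+1)) (1-q)^Δ (condition on the first vertex
      of Γ̂_A(u) that selects itself), and a real-analysis estimate bounds this
      from below by (1 - e^(-1/2)) e^(-1), with q = 1/(Δ+1).
   The theorem is then the product bound of 1 applied to the survival events,
   using 2 for independence and 3 for the individual bounds. *)

From HB Require Import structures.
From mathcomp Require Import all_boot.
From Stdlib Require Import Reals Lra.

Set Implicit Arguments.
Unset Strict Implicit.
Unset Printing Implicit Defensive.

(* Real addition as a commutative monoid, so that the generic [bigop]
   lemmas apply to the sums defining [prob_sel]. *)
HB.instance Definition _ := Monoid.isComLaw.Build R 0%R Rplus
  (fun a b c => esym (Rplus_assoc a b c)) Rplus_comm Rplus_0_l.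

Lemma big_Rmult_distrl (I : Type) (r : seq I) (P : pred I) (c : R) (F : I -> R) :
  \big[Rplus/0%R]_(i <- r | P i) (c * F i)%R =
  (c * \big[Rplus/0%R]_(i <- r | P i) F i)%R.
Proof.
apply: (big_rec2 (fun x y => x = c * y)%R); first by rewrite Rmult_0_r.
by move=> i x y _ ->; rewrite Rmult_plus_distr_l.
Qed.

Lemma big_Rplus_ge0 (I : Type) (r : seq I) (P : pred I) (F : I -> R) :
  (forall i, P i -> 0 <= F i)%R -> (0 <= \big[Rplus/0%R]_(i <- r | P i) F i)%R.
Proof.
move=> F_ge0; apply: (big_rec (fun x => 0 <= x)%R); first lra.
by move=> i x /F_ge0; lra.
Qed.

Lemma set_ind_U1 (T : finType) (Pr : {set T} -> Prop) :
  Pr set0 -> (forall (a : T) (A : {set T}), a \notin A -> Pr A -> Pr (a |: A)) ->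
  forall A, Pr A.
Proof.
move=> Pr0 PrU1 A; move: {2}#|A| (erefl #|A|) => n.
elim: n A => [|n IH] A cardA.
  by move/eqP: cardA; rewrite cards_eq0 => /eqP ->.
have [A0|[a aA]] := set_0Vmem A; first by rewrite A0 cards0 in cardA.
rewrite -(setD1K aA); apply: PrU1; first by rewrite setD11.
by apply: IH; move: cardA; rewrite (cardsD1 a A) aA add1n => -[].
Qed.

Lemma subsetU1_notin (T : finType) (A X : {set T}) (a : T) :
  a \notin X -> (X \subset a |: A) = (X \subset A).
Proof.
move=> aX; apply/idP/idP => [/subsetP XaA|XA]; last exact: subset_trans XA (subsetU1 _ _).
apply/subsetP => x xX; have := XaA x xX; rewrite in_setU1.
by case/orP=> // /eqP ex; rewrite -ex xX in aX.
Qed.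

Lemma forall_in_U1 (T : finType) (u : T) (S : {set T}) (P : pred T) :
  [forall x in u |: S, P x] = P u && [forall x in S, P x].
Proof.
apply/forallP/andP => [H|[Pu /forallP H] x].
  split; first by have := H u; rewrite setU11.
  by apply/forallP => x; apply/implyP => xS; have := H x; rewrite in_setU1 xS orbT.
by apply/implyP; rewrite in_setU1 => /orP[/eqP ->|xS] //; apply: (implyP (H x)).
Qed.

Section ProductMeasure.

Variables (T : finType) (q : R).

Local Notation mu A P := (prob_sel A q P).

Definition depends_on (D : {set T}) (P : {set T} -> bool) : Prop :=
  forall X : {set T}, P X = P (X :&: D).

Lemma prob_sel_set0 (P : {set T} -> bool) :
  mu set0 P = (if P set0 then 1 else 0)%R.
Proof.
rewrite /prob_sel; case P0: (P set0).
  rewrite (eq_bigl (pred1 set0)) ?big_pred1_eq ?cards0 /=; first ring.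
  by move=> X /=; rewrite subset0; case: eqP => // ->; rewrite P0.
rewrite (eq_bigl pred0) ?big_pred0_eq // => X /=.
by rewrite subset0; case: eqP => // ->; rewrite P0.
Qed.

Lemma prob_sel_U1 (A : {set T}) (a : T) (P : {set T} -> bool) :
  a \notin A ->
  mu (a |: A) P = (q * mu A (fun X => P (a |: X)) + (1 - q) * mu A P)%R.
Proof.
move=> aA; rewrite /prob_sel (bigID (fun X : {set T} => a \in X)) /=.
have cardaA : #|a |: A| = #|A|.+1 by rewrite cardsU1 aA.
congr (_ + _)%R; rewrite -big_Rmult_distrl.
- rewrite (reindex_onto (fun Y => a |: Y) (fun X => X :\ a)) /=; last first.
    by move=> X /andP[_ aX]; rewrite setD1K.
  apply: eq_big => [X|X /andP[/andP[/andP[_ _] _] /eqP eX]].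
    rewrite setU11 andbT; case XA: (X \subset A).
      have aX : a \notin X by apply: contra aA; apply: (subsetP XA).
      by rewrite setU1K // eqxx andbT setUS.
    case: eqP => [eX|]; last by rewrite andbF.
    have aX : a \notin X by rewrite -eX setD11.
    by rewrite subUset sub1set setU11 /= subsetU1_notin // XA.
  have aX : a \notin X by rewrite -eX setD11.
  rewrite cardsU1 aX add1n cardaA subSS /=; ring.
- apply: eq_big => [X|X /andP[/andP[XA _] aX]].
    case aX: (a \in X); rewrite ?andbF ?andbT //=.
      by case XA: (X \subset A) => //; rewrite (subsetP XA _ aX) in aA.
    by rewrite subsetU1_notin ?aX.
  rewrite subsetU1_notin // in XA.
  rewrite cardaA subSn ?subset_leq_card //=; ring.
Qed.

Lemma prob_sel_ext (A : {set T}) (P Q : {set T} -> bool) :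
  (forall X : {set T}, X \subset A -> P X = Q X) -> mu A P = mu A Q.
Proof.
move=> PQ; apply: eq_bigl => X.
by case XA: (X \subset A) => //=; apply: PQ.
Qed.

Lemma prob_sel_false (A : {set T}) : mu A (fun _ => false) = 0%R.
Proof. by rewrite /prob_sel (eq_bigl pred0) ?big_pred0_eq // => X; rewrite andbF. Qed.

Lemma prob_sel_avoid (N A : {set T}) :
  mu A (fun X => X :&: N == set0) = ((1 - q) ^ #|A :&: N|)%R.
Proof.
elim/set_ind_U1: A => [|a A aA IH].
  by rewrite prob_sel_set0 set0I eqxx cards0.
rewrite prob_sel_U1 // IH setIUl.
have [aN|aN] := boolP (a \in N).
  have -> : [set a] :&: N = [set a] by apply/setIidPl; rewrite sub1set.
  rewrite (prob_sel_ext (Q := fun _ => false)); last first.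
    by move=> X _; apply/negbTE/set0Pn; exists a; rewrite !inE eqxx.
  rewrite prob_sel_false cardsU1 in_setI (negbTE aA) add1n /=; ring.
have aN0 : [set a] :&: N = set0.
  by apply/setP => x; rewrite !inE; case: eqP => // ->; rewrite (negbTE aN).
rewrite aN0 set0U (prob_sel_ext (Q := fun X => X :&: N == set0)) ?IH; first ring.
by move=> X _; rewrite setIUl aN0 set0U.
Qed.

Lemma prob_sel_true (A : {set T}) : mu A (fun _ => true) = 1%R.
Proof.
rewrite (prob_sel_ext (Q := fun X => X :&: set0 == set0)).
  by rewrite prob_sel_avoid setI0 cards0.
by move=> X _; rewrite setI0 eqxx.
Qed.

Lemma prob_sel_split (A : {set T}) (P Q : {set T} -> bool) :
  mu A Q = (mu A (fun X => Q X && P X) + mu A (fun X => Q X && ~~ P X))%R.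
Proof.
rewrite /prob_sel (bigID P) /=.
by congr (_ + _)%R; apply: eq_bigl => X; rewrite andbA.
Qed.

Lemma prob_sel_compl (A : {set T}) (P : {set T} -> bool) :
  mu A (fun X => ~~ P X) = (1 - mu A P)%R.
Proof.
have := prob_sel_split A P (fun _ => true).
rewrite prob_sel_true /= => split1.
by change (mu A (fun X => P X)) with (mu A P) in split1; lra.
Qed.

Hypothesis q01 : (0 <= q <= 1)%R.

Lemma prob_sel_ge0 (A : {set T}) (P : {set T} -> bool) : (0 <= mu A P)%R.
Proof. by apply: big_Rplus_ge0 => X _; apply: Rmult_le_pos; apply: pow_le; lra. Qed.

Lemma prob_sel_mono (A : {set T}) (P Q : {set T} -> bool) :
  (forall X : {set T}, P X -> Q X) -> (mu A P <= mu A Q)%R.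
Proof.
move=> PQ; rewrite (prob_sel_split A P Q).
rewrite (prob_sel_ext (P := fun X => Q X && P X) (Q := P)).
  by have := prob_sel_ge0 A (fun X => Q X && ~~ P X); lra.
by move=> X _; case PX: (P X); rewrite ?andbT ?andbF // PQ.
Qed.

Lemma depends_on_U1_in (D : {set T}) (P : {set T} -> bool) (a : T) :
  depends_on D P -> a \in D -> depends_on D (fun X => P (a |: X)).
Proof.
move=> PD aD X /=; rewrite PD [in RHS]PD; congr P.
by apply/setP=> x; rewrite !inE; case: eqP => [->|_] //=; rewrite -andbA andbb.
Qed.

Lemma depends_on_U1_out (D : {set T}) (P : {set T} -> bool) (a : T) :
  depends_on D P -> a \notin D -> forall X : {set T}, P (a |: X) = P X.
Proof.
move=> PD aD X; rewrite PD [in RHS]PD; congr P.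
by apply/setP=> x; rewrite !inE; case: eqP => [->|_] //=; rewrite (negbTE aD) andbF.
Qed.

Lemma prob_sel_indep (D A : {set T}) (P Q : {set T} -> bool) :
  depends_on D P -> depends_on (~: D) Q ->
  mu A (fun X => P X && Q X) = (mu A P * mu A Q)%R.
Proof.
elim/set_ind_U1: A P Q => [|a A aA IH] P Q PD QD.
  by rewrite !prob_sel_set0; case: (P set0); case: (Q set0) => /=; ring.
rewrite !prob_sel_U1 //.
have [aD|aD] := boolP (a \in D).
  have Qa : forall X : {set T}, Q (a |: X) = Q X.
    by apply: depends_on_U1_out; rewrite // inE aD.
  have PQa : mu A (fun X => P (a |: X) && Q (a |: X)) =
             mu A (fun X => P (a |: X) && Q X).
    by apply: prob_sel_ext => X _; rewrite Qa.
  have QaQ : mu A (fun X => Q (a |: X)) = mu A Q.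
    by apply: prob_sel_ext => X _; rewrite Qa.
  have PaD := depends_on_U1_in PD aD.
  by rewrite PQa QaQ IH ?(IH P Q) //; ring.
have Pa : forall X : {set T}, P (a |: X) = P X by apply: depends_on_U1_out.
have PQa : mu A (fun X => P (a |: X) && Q (a |: X)) =
           mu A (fun X => P X && Q (a |: X)).
  by apply: prob_sel_ext => X _; rewrite Pa.
have PaP : mu A (fun X => P (a |: X)) = mu A P.
  by apply: prob_sel_ext => X _; rewrite Pa.
have QaD : depends_on (~: D) (fun X => Q (a |: X)).
  by apply: depends_on_U1_in; rewrite // inE.
by rewrite PQa PaP IH ?(IH P Q) //; ring.
Qed.

Lemma prob_sel_all_le (A S : {set T}) (B : T -> {set T})
    (E : T -> {set T} -> bool) (c : R) :
  (forall u, u \in S -> depends_on (B u) (E u)) ->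
  (forall u v, u \in S -> v \in S -> u != v -> [disjoint B u & B v]) ->
  (forall u, u \in S -> mu A (E u) <= c)%R ->
  (mu A (fun X => [forall u in S, E u X]) <= c ^ #|S|)%R.
Proof.
elim/set_ind_U1: S => [|u S uS IH] EB Bdisj Ele.
  rewrite (prob_sel_ext (Q := fun _ => true)) ?prob_sel_true ?cards0 /=; first lra.
  by move=> X _; apply/forallP => x; rewrite inE.
have uuS : u \in u |: S := setU11 u S.
have SuS : {subset S <= u |: S} by move=> x xS; rewrite in_setU1 xS orbT.
rewrite (prob_sel_ext (Q := fun X => E u X && [forall x in S, E x X])); last first.
  by move=> X _; rewrite forall_in_U1.
have restD : depends_on (~: B u) (fun X => [forall x in S, E x X]).
  move=> X; apply: eq_forallb => x; case xS: (x \in S) => //=.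
  have xu : x != u by apply: contraNneq uS => <-.
  have Bxu : B x \subset ~: B u by rewrite -disjoints_subset; apply: Bdisj => //; apply: SuS.
  by rewrite EB ?SuS // [RHS]EB ?SuS // -setIA (setIidPr Bxu).
rewrite (prob_sel_indep _ (EB u uuS) restD) cardsU1 uS add1n /=.
apply: Rmult_le_compat; [exact: prob_sel_ge0 | exact: prob_sel_ge0 | exact: Ele |].
apply: IH => [x xS | x y xS yS | x xS]; first exact/EB/SuS.
  by apply: Bdisj; apply: SuS.
exact/Ele/SuS.
Qed.

End ProductMeasure.

Lemma pow_le_antimono (x : R) (m n : nat) :
  (0 <= x <= 1)%R -> (m <= n)%N -> (x ^ n <= x ^ m)%R.
Proof.
move=> x01 mn; rewrite -(subnK mn) pow_add.
have : (x ^ (n - m) <= 1)%R by rewrite -(pow1 (n - m)); apply: pow_incr; lra.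
have : (0 <= x ^ (n - m))%R by apply: pow_le; lra.
have : (0 <= x ^ m)%R by apply: pow_le; lra.
nra.
Qed.

Lemma exp_le_mono (x y : R) : (x <= y)%R -> (exp x <= exp y)%R.
Proof. by case/Rle_lt_or_eq_dec => [/exp_increasing|->]; lra. Qed.

Lemma exp_pow (x : R) (n : nat) : (exp x ^ n = exp (INR n * x))%R.
Proof.
elim: n => [|n IH]; first by rewrite /= Rmult_0_l exp_0.
by rewrite S_INR -tech_pow_Rmult IH -exp_plus; congr exp; ring.
Qed.

Lemma sel_prob01 (D : nat) : (0 <= / (INR D + 1) <= 1)%R.
Proof.
have D0 := pos_INR D; split; first by left; apply: Rinv_0_lt_compat; lra.
by rewrite -Rinv_1; apply: Rinv_le_contravar; lra.
Qed.

(* With q = 1/(Δ+1): no vertex of a set of size Δ selects itself with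
   probability (1-q)^Δ >= e^(-1). *)
Lemma exp_neg1_le_pow (D : nat) :
  (1 <= D)%N -> (exp (-1) <= (1 - / (INR D + 1)) ^ D)%R.
Proof.
move=> /leP D1; have D1' : (1 <= INR D)%R by apply: (le_INR 1).
have step : (exp (- / INR D) <= 1 - / (INR D + 1))%R.
  have Dinv0 : (0 < / INR D)%R by apply: Rinv_0_lt_compat; lra.
  rewrite exp_Ropp; apply: Rle_trans (Rinv_le_contravar _ _ _ (exp_ineq1_le _)) _.
    lra.
  by right; field; lra.
have -> : (exp (-1) = exp (- / INR D) ^ D)%R.
  by rewrite exp_pow; congr exp; field; lra.
by apply: pow_incr; split; first exact/Rlt_le/exp_pos.
Qed.

(* With q = 1/(Δ+1) and d >= Δ/2: none of d+1 vertices selects itself with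
   probability (1-q)^(d+1) <= e^(-1/2). *)
Lemma pow_le_exp_neg_half (D d : nat) :
  (INR D / 2 <= INR d)%R -> ((1 - / (INR D + 1)) ^ d.+1 <= exp (- / 2))%R.
Proof.
move=> hd; have D0 := pos_INR D; set q := (/ (INR D + 1))%R.
have qD : (q * (INR D + 1) = 1)%R by rewrite /q; field; lra.
have q01 := sel_prob01 D; rewrite -/q in q01.
apply: Rle_trans (_ : exp (- q) ^ d.+1 <= _)%R.
  by apply: pow_incr; have := exp_ineq1_le (- q); lra.
rewrite exp_pow; apply: exp_le_mono; rewrite S_INR.
have : (0 <= 2 * (INR d + 1) - (INR D + 1))%R by lra.
nra.
Qed.

(* The real estimate behind the constant p = 1 - (1 - e^(-1/2)) e^(-1). *)
Lemma removal_prob_bound (D d : nat) :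
  (1 <= D)%N -> (INR D / 2 <= INR d)%R ->
  ((1 - exp (- / 2)) * exp (-1) <=
   (1 - (1 - / (INR D + 1)) ^ d.+1) * (1 - / (INR D + 1)) ^ D)%R.
Proof.
move=> D1 hd; have q01 := sel_prob01 D.
have ha := exp_neg1_le_pow D1; have hb := pow_le_exp_neg_half hd.
have : (0 < exp (-1))%R by apply: exp_pos.
have : (exp (- / 2) <= 1)%R by rewrite -exp_0; apply: exp_le_mono; lra.
have : (0 <= (1 - / (INR D + 1)) ^ d.+1)%R by apply: pow_le; lra.
nra.
Qed.

Section OneStage.

Variables (T : finType) (e : rel T).
Hypothesis e_sym : symmetric e.
Hypothesis e_irr : irreflexive e.

Definition joins (X : {set T}) (w : T) : bool :=
  (w \in X) && [forall v, e w v ==> (v \notin X)].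

Definition removed (u : T) (X : {set T}) : bool :=
  [exists w, ((w == u) || e w u) && joins X w].

Lemma mem_cnbhd (U : {set T}) (v : T) :
  (v \in cnbhd e U) = (v \in U) || [exists u in U, e u v].
Proof. by rewrite /cnbhd in_set. Qed.

(* For selections inside A_i, the restriction of the neighbourhood test to
   A_i in [next_indep] is immaterial. *)
Lemma mem_next_indep (I X : {set T}) (v : T) :
  X \subset avail e I -> (v \in next_indep e I X) = (v \in I) || joins X v.
Proof.
move=> XA; rewrite /next_indep in_setU inE; congr orb.
rewrite /joins; case vX: (v \in X); rewrite ?andbF //= (subsetP XA v vX) /=.
apply: eq_forallb => w; case wA: (w \in avail e I) => //=.
have wX : w \notin X by apply: contraFN wA => /(subsetP XA).
by rewrite wX implybT.
Qed.

Lemma avail_next_indep (I X : {set T}) (u : T) :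
  X \subset avail e I -> u \in avail e I ->
  (u \in avail e (next_indep e I X)) = ~~ removed u X.
Proof.
move=> XA; rewrite /avail !in_setC !mem_cnbhd => /norP[uI /existsPn noI].
congr negb; rewrite mem_next_indep // (negbTE uI) /=.
apply/idP/existsP => [/orP[ju|/existsP[z /andP[]]]|[w /andP[/orP[/eqP->|ewu] jw]]].
- by exists u; rewrite eqxx.
- rewrite mem_next_indep // => /orP[zI|jz] ezu; first by have := noI z; rewrite zI ezu.
  by exists z; rewrite ezu orbT.
- by rewrite jw.
- by apply/orP; right; apply/existsP; exists w; rewrite mem_next_indep // jw orbT.
Qed.

Lemma mem_ballS (n : nat) (u x : T) :
  (x \in ball e n.+1 u) = (x \in ball e n u) || [exists y in ball e n u, e y x].
Proof. exact: mem_cnbhd. Qed.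

Lemma mem_ball1 (u w : T) : (w \in ball e 1 u) = (w == u) || e u w.
Proof.
rewrite mem_ballS inE; congr orb; apply/existsP/idP => [[y]|euw].
  by rewrite inE => /andP[/eqP ->].
by exists u; rewrite inE eqxx.
Qed.

Lemma ball_subS (n : nat) (u x : T) : x \in ball e n u -> x \in ball e n.+1 u.
Proof. by move=> xu; rewrite mem_ballS xu. Qed.

Lemma ball_trans (m n : nat) (x y z : T) :
  y \in ball e m x -> z \in ball e n y -> z \in ball e (m + n) x.
Proof.
move=> yx; elim: n z => [|n IH] z; first by rewrite inE addn0 => /eqP ->.
rewrite mem_ballS addnS => /orP[/IH/ball_subS //|/existsP[y' /andP[y'y ey'z]]].
by rewrite mem_ballS; apply/orP; right; apply/existsP; exists y'; rewrite IH.
Qed.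

Lemma ball_sym (n : nat) (x y : T) : y \in ball e n x -> x \in ball e n y.
Proof.
elim: n y => [|n IH] y; first by rewrite !inE eq_sym.
rewrite mem_ballS => /orP[/IH/ball_subS //|/existsP[y' /andP[y'x ey'y]]].
have y'1 : y' \in ball e 1 y by rewrite mem_ball1 e_sym ey'y orbT.
by have := ball_trans y'1 (IH _ y'x); rewrite add1n.
Qed.

Lemma far_balls_disjoint (u u' : T) :
  dist_ge e 5 u u' -> [disjoint ball e 2 u & ball e 2 u'].
Proof.
move=> far; rewrite disjoints_subset; apply/subsetP => z zu.
rewrite in_setC; apply/negP => zu'.
by have := ball_trans zu (ball_sym zu'); rewrite (negbTE far).
Qed.

Lemma joins_local (D X : {set T}) (w : T) :
  w \in D -> (forall v, e w v -> v \in D) -> joins X w = joins (X :&: D) w.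
Proof.
move=> wD ND; rewrite /joins inE wD andbT; congr andb.
by apply: eq_forallb => v; case ewv: (e w v) => //=; rewrite inE ND // andbT.
Qed.

Lemma removed_local (u : T) : depends_on (ball e 2 u) (removed u).
Proof.
move=> X; apply: eq_existsb => w; case wu: ((w == u) || e w u) => //=.
have w1 : w \in ball e 1 u by rewrite mem_ball1 e_sym.
apply: joins_local => [|v ewv]; first exact: ball_subS w1.
by rewrite (mem_ballS 1); apply/orP; right; apply/existsP; exists w; rewrite w1.
Qed.

Lemma joins_selected_alone (X : {set T}) (w : T) :
  X :&: [set v | e w v] == set0 -> joins (w |: X) w.
Proof.
move=> /eqP XN; rewrite /joins setU11 /=; apply/forallP => v; apply/implyP => ewv.
rewrite in_setU1 negb_or; apply/andP; split.
  by apply: contraTneq ewv => ->; rewrite e_irr.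
apply/negP => vX; have : v \in X :&: [set v | e w v] by rewrite !inE vX ewv.
by rewrite XN inE.
Qed.

(* Some vertex of W joins with probability at least (1 - (1-q)^|W|) (1-q)^Δ,
   if every vertex of W has at most Δ neighbours in A: condition on whether
   the first vertex of W selects itself. *)
Lemma prob_some_joins_ge (q : R) (Dl : nat) (W A : {set T}) :
  (0 <= q <= 1)%R -> W \subset A ->
  (forall w, w \in W -> #|[set v in A | e w v]| <= Dl)%N ->
  ((1 - (1 - q) ^ #|W|) * (1 - q) ^ Dl <=
   prob_sel A q (fun X => [exists w in W, joins X w]))%R.
Proof.
move=> q01; elim/set_ind_U1: W A => [|w W wW IH] A WA degW.
  by rewrite cards0 /= Rminus_diag Rmult_0_l; apply: prob_sel_ge0.
have wA : w \in A by apply: (subsetP WA); rewrite setU11.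
have WAw : W \subset A :\ w.
  apply/subsetP => x xW; rewrite in_setD1 (subsetP WA) ?andbT ?in_setU1 ?xW ?orbT //.
  by apply: contraNneq wW => <-.
have degA : forall x, x \in w |: W -> (#|[set v in A :\ w | e x v]| <= Dl)%N.
  move=> x xW; apply: leq_trans (degW x xW); apply: subset_leq_card.
  by apply/subsetP => v; rewrite !inE => /andP[/andP[_ ->] ->].
have selected : ((1 - q) ^ Dl <= prob_sel (A :\ w) q
                   (fun X => [exists x in w |: W, joins (w |: X) x]))%R.
  have alone : forall X : {set T}, X :&: [set v | e w v] == set0 ->
                         [exists x in w |: W, joins (w |: X) x].
    by move=> X /joins_selected_alone jw; apply/existsP; exists w; rewrite setU11.
  apply: (Rle_trans _ _ _ _ (prob_sel_mono q01 _ alone)).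
  rewrite prob_sel_avoid; apply: pow_le_antimono; first lra.
  apply: leq_trans (degA w (setU11 _ _)); apply: subset_leq_card.
  by apply/subsetP => v; rewrite !inE => /andP[->].
have unselected : ((1 - (1 - q) ^ #|W|) * (1 - q) ^ Dl <= prob_sel (A :\ w) q
                     (fun X => [exists x in w |: W, joins X x]))%R.
  apply: (Rle_trans _ _ _ (IH _ WAw _) (prob_sel_mono q01 _ _)) => [x xW|X].
    by apply: degA; rewrite in_setU1 xW orbT.
  by case/existsP => x /andP[xW jx]; apply/existsP; exists x; rewrite in_setU1 xW orbT.
rewrite -(setD1K wA) prob_sel_U1 ?setD11 // cardsU1 wW add1n /=.
have : (0 <= (1 - q) ^ Dl)%R by apply: pow_le; lra.
have : (0 <= (1 - q) ^ #|W|)%R by apply: pow_le; lra.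
nra.
Qed.

(* A vertex with at least Δ/2 available neighbours survives the stage with
   probability at most p: it is removed as soon as some vertex of Γ̂_A(u)
   joins, and every vertex has at most Δ neighbours. *)
Lemma prob_survive_le (A : {set T}) (u : T) :
  (1 <= maxdeg e)%N -> u \in A ->
  (INR (maxdeg e) / 2 <= INR (deg_in e A u))%R ->
  (prob_sel A (/ (INR (maxdeg e) + 1)) (fun X => ~~ removed u X) <= p_const)%R.
Proof.
move=> D1 uA degu; have q01 := sel_prob01 (maxdeg e).
set W := [set w in A | (w == u) || e w u].
have WA : W \subset A by apply/subsetP => w; rewrite inE => /andP[].
have cardW : #|W| = (deg_in e A u).+1.
  rewrite /deg_in (_ : W = u |: [set v in A | e u v]).
    by rewrite cardsU1 inE e_irr andbF add1n.
  apply/setP => w; rewrite in_setU1 !inE; case: eqP => [->|_] /=; first by rewrite uA.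
  by rewrite (e_sym w u).
have degW : forall w, w \in W -> (#|[set v in A | e w v]| <= maxdeg e)%N.
  move=> w _; apply: leq_trans (leq_bigmax w); apply: subset_leq_card.
  by apply/subsetP => v; rewrite !inE => /andP[].
have joins_removed : forall X : {set T}, [exists w in W, joins X w] -> removed u X.
  move=> X /existsP[w /andP[wW jw]]; apply/existsP; exists w.
  by rewrite jw andbT; rewrite inE in wW; case/andP: wW.
have := prob_some_joins_ge q01 WA degW.
have := prob_sel_mono q01 A joins_removed.
have := removal_prob_bound D1 degu.
have := prob_sel_compl (/ (INR (maxdeg e) + 1)) A (removed u).
by rewrite /p_const cardW; lra.
Qed.

End OneStage.

Theorem lemma4 (T : finType) (e : rel T) (I S : {set T}) :
  simple_graph e ->
  (1 <= maxdeg e)%N ->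
  independent e I ->
  S \subset avail e I ->
  (forall u u', u \in S -> u' \in S -> u != u' -> dist_ge e 5 u u') ->
  (forall u, u \in S -> (INR (maxdeg e) / 2 <= INR (deg_in e (avail e I) u))%R) ->
  (prob_sel (avail e I) (/ (INR (maxdeg e) + 1))
     (fun X => S \subset avail e (next_indep e I X))
   <= p_const ^ #|S|)%R.
Proof.
move=> [e_sym e_irr] D1 _ SA far degS.
(* S survives iff none of its vertices is removed. *)
rewrite (prob_sel_ext _ (Q := fun X => [forall u in S, ~~ removed e u X])); last first.
  move=> X XA; apply/subsetP/forallP => [surv u|surv u uS].
    apply/implyP => uS; rewrite -(@avail_next_indep _ _ I) ?(subsetP SA) //; exact: surv.
  by rewrite avail_next_indep ?(subsetP SA) //; apply: (implyP (surv u)).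
(* The removal events are local to disjoint balls of radius 2. *)
apply: (prob_sel_all_le (sel_prob01 _) (B := ball e 2)) => [u _|u v uS vS uv|u uS].
- by move=> X; rewrite (removed_local e_sym).
- by apply: (far_balls_disjoint e_sym); apply: far.
- by apply: prob_survive_le => //; [apply: (subsetP SA) | apply: degS].
Qed.
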